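(* Let $d\ge2$, let $\omega$ be any configuration, and let $C^*$ be an open dual cluster. Then \[ \partial B_{C^*}=\bigcup_{e^*\in\Delta C^*}Q_{e^*}, \] where $\partial$ denotes the topological boundary in $\mathbb{R}^d$.
   Context: Dual lattice: vertices $(\mathbb{Z}^d)^*=\mathbb{Z}^d+(1/2,\dots,1/2)$, dual bonds $\langle x^*,y^*\rangle$ with $\|x^*-y^*\|_1=1$. For $x^*\in(\mathbb{Z}^d)^*$, $B_{x^*}=\prod_{i=1}^d[(x^* )_i-1/2,(x^* )_i+1/2]$, and for a dual bond $e^*=\langle x^*,y^*\rangle$, $Q_{e^*}=B_{x^*}\cap B_{y^*}$ (a $(d-1)$-dimensional unit face). Given a configuration in which each dual bond is open or closed, an open dual cluster $C^*$ is a connected component (possibly a single vertex) of the graph of open dual bonds; $B_{C^*}=\bigcup_{x^*\in C^*}B_{x^*}$, and $\Delta C^*$ is the set of dual bonds with exactly one endpoint in $C^*$. *)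

From HB Require Import structures.
From mathcomp Require Import all_boot all_order all_algebra.
From mathcomp Require Import all_classical all_reals all_analysis.
From Stdlib Require Import Relations.
Import numFieldNormedType.Exports.
Set Implicit Arguments. Unset Strict Implicit. Unset Printing Implicit Defensive.
Import Order.TTheory GRing.Theory Num.Theory.
Local Open Scope classical_set_scope.
Local Open Scope ring_scope.

(* A dual vertex x* = z + (1/2,...,1/2) is represented by its integer part
   z : 'I_d -> int. *)
Definition dvertex (d : nat) := 'I_d -> int.

Definition shift (d : nat) (z : dvertex d) (i : 'I_d) : dvertex d :=
  fun j => if j == i then z j + 1 else z j.

(* Every dual bond is uniquely of the form <z, z + e_i>; we index dual bonds
   by pairs (i, z).  A configuration assigns open (true) / closed (false)
   to each dual bond. *)
Definition config (d : nat) := 'I_d -> dvertex d -> bool.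

Definition open_adj (d : nat) (w : config d) (x y : dvertex d) : Prop :=
  exists i : 'I_d, (y = shift x i /\ w i x) \/ (x = shift y i /\ w i y).

Definition dual_cluster (d : nat) (w : config d) (x0 : dvertex d) : set (dvertex d) :=
  [set y | clos_refl_trans _ (@open_adj d w) x0 y].

Definition dual_coord (R : realType) (d : nat) (z : dvertex d) (i : 'I_d) : R :=
  (z i)%:~R + 2^-1.

Definition box (R : realType) (d : nat) (z : dvertex d) : set 'rV[R]_d :=
  [set p | forall i : 'I_d,
     dual_coord R z i - 2^-1 <= p ord0 i <= dual_coord R z i + 2^-1].

Arguments dual_coord R {d} z i.
Arguments box R {d} z.

Definition face (R : realType) (d : nat) (i : 'I_d) (z : dvertex d) : set 'rV[R]_d :=
  box R z `&` box R (shift z i).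

Arguments face R {d} i z.

Definition cluster_box (R : realType) (d : nat) (C : set (dvertex d)) : set 'rV[R]_d :=
  \bigcup_(z in C) box R z.

Arguments cluster_box R {d} C.

Definition edge_boundary (d : nat) (C : set (dvertex d)) : set ('I_d * dvertex d) :=
  [set e | (C e.2 /\ ~ C (shift e.2 e.1)) \/ (~ C e.2 /\ C (shift e.2 e.1))].

Definition topo_boundary (T : topologicalType) (A : set T) : set T :=
  closure A `\` interior A.

(* B_C is a locally finite union of closed unit cubes with integer corners:
   every point p has a neighbourhood meeting only cubes that contain p, because
   the integers are isolated around each coordinate of p.  Hence p lies on the
   boundary of B_C exactly when it lies both in a cube of C and in a cube
   outside C.  The integer corners z (in C) and y (outside C) of two such cubes
   differ by at most 1 in each coordinate; replacing the coordinates of z by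
   those of y one at a time gives cubes that all contain p, and the first step
   that leaves C crosses a face of Delta C containing p. *)

From Pilot Require Import Defs.
From HB Require Import structures.
From mathcomp Require Import all_boot all_order all_algebra.
From mathcomp Require Import all_classical all_reals all_analysis.
From mathcomp Require Import lra zify.
Import Order.TTheory GRing.Theory Num.Theory.
Import numFieldNormedType.Exports.
Local Open Scope classical_set_scope.
Local Open Scope ring_scope.

Lemma exists_last_step (P : nat -> Prop) (n : nat) :
  P 0%N -> ~ P n -> exists k, [/\ (k < n)%N, P k & ~ P k.+1].
Proof.
move=> P0; elim: n => [|n IHn] nPn; first by [].
have [Pn|nPn'] := pselect (P n); first by exists n.
by have [k [ltkn Pk nPk]] := IHn nPn'; exists k; rewrite ltnW.
Qed.

Section UnitBoxes.
Context {R : realType} {d : nat}.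
Implicit Types (C : set (dvertex d)) (z y : dvertex d) (p q : 'rV[R]_d).

Lemma boxE z p : box R z p <-> forall i, (z i)%:~R <= p ord0 i <= (z i)%:~R + 1.
Proof.
rewrite /box /dual_coord; have half2 : (2^-1 + 2^-1 : R) = 1 by lra.
by split=> zp i; move: (zp i); rewrite addrK -addrA half2.
Qed.

Lemma box_floor q : box R (fun i => Num.floor (q ord0 i)) q.
Proof.
apply/boxE=> i; have /andP[lefq ltqf] := floor_itv (q ord0 i).
by rewrite lefq ltW // -[1]/(1%:~R) -rmorphD.
Qed.

Lemma int_isolated (a : R) : exists2 r : R, 0 < r &
  forall m : int, `|m%:~R - a| < r -> m%:~R = a.
Proof.
set f := Num.floor a; have /andP[lefa ltaf] := floor_itv a.
have [efa|nefa] := eqVneq (f%:~R) a.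
  exists 1 => // m; rewrite -efa -rmorphB /= -intr_norm ltrz1.
  by move=> ?; apply/eqP; rewrite eqr_int; lia.
have ltfa : f%:~R < a by rewrite lt_neqAle nefa lefa.
exists (Num.min (a - f%:~R) ((f + 1)%:~R - a)).
  by rewrite lt_min !subr_gt0 ltfa.
move=> m; rewrite lt_min !ltr_norml => /andP[/andP[? _] /andP[_ ?]].
have [lemf|ltfm] := leP m f.
  have : (m%:~R : R) <= f%:~R by rewrite ler_int.
  lra.
have : ((f + 1)%:~R : R) <= m%:~R by rewrite ler_int; lia.
lra.
Qed.

Lemma near_unit_itv (a : R) : \forall x \near a,
  forall k : int, k%:~R <= x <= k%:~R + 1 -> k%:~R <= a <= k%:~R + 1.
Proof.
have [r r0 isol] := int_isolated a.
near=> x => k /andP[lekx lexk].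
have : ball a r x by near: x; exact: nbhsx_ballx.
rewrite /ball /= distrC ltr_norml => /andP[? ?]; apply/andP; split.
- rewrite leNgt; apply/negP => ltak.
  have := isol k; rewrite ltr_norml; lra.
- rewrite leNgt; apply/negP => ltka.
  have := isol (k + 1); rewrite rmorphD /= ltr_norml; lra.
Unshelve. all: by end_near.
Qed.

Lemma near_box p : \forall q \near p, forall z, box R z q -> box R z p.
Proof.
have near_coord j : \forall q \near p, forall k : int,
    k%:~R <= (q : 'rV[R]_d) ord0 j <= k%:~R + 1 ->
    k%:~R <= p ord0 j <= k%:~R + 1.
  exact: (@coord_continuous R 1 d ord0 j p _ (near_unit_itv (p ord0 j))).
near=> q => z /boxE zq; apply/boxE => j.
suff near_all : forall j k, k%:~R <= q ord0 j <= k%:~R + 1 ->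
  k%:~R <= p ord0 j <= k%:~R + 1 by exact/near_all/zq.
by near: q; apply: filter_forall.
Unshelve. all: by end_near.
Qed.

Lemma box_meet_dist_le1 {z y p} :
  box R z p -> box R y p -> forall i, `|z i - y i| <= 1.
Proof.
move=> /boxE zp /boxE yp i; have /andP[? ?] := zp i; have /andP[? ?] := yp i.
have : (z i)%:~R < (y i + 2)%:~R :> R by rewrite rmorphD /=; lra.
have : (y i)%:~R < (z i + 2)%:~R :> R by rewrite rmorphD /=; lra.
rewrite !ltr_int; lia.
Qed.

Lemma box_inner_eq {z y q} : box R z q ->
  (forall i, (y i)%:~R < q ord0 i < (y i)%:~R + 1) -> z = y.
Proof.
move=> /boxE zq qy; apply/funext => i.
have /andP[? ?] := zq i; have /andP[? ?] := qy i.
have : (z i)%:~R < (y i + 1)%:~R :> R by rewrite rmorphD /=; lra.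
have : (y i)%:~R < (z i + 1)%:~R :> R by rewrite rmorphD /=; lra.
rewrite !ltr_int; lia.
Qed.

End UnitBoxes.

Lemma shift_cases {d} {u v : dvertex d} {i} :
  (forall j, j != i -> v j = u j) -> `|v i - u i| <= 1 ->
  [\/ v = u, v = Defs.shift u i | u = Defs.shift v i].
Proof.
move=> offi near_i.
have [vu|[vu|uv]] : v i = u i \/ v i = u i + 1 \/ u i = v i + 1 by lia.
- by constructor 1; apply/funext => j; have [->|/offi] := eqVneq j i.
- constructor 2; apply/funext => j; rewrite /Defs.shift.
  by have [->|/offi] := eqVneq j i.
- constructor 3; apply/funext => j; rewrite /Defs.shift.
  by have [->|/offi] := eqVneq j i.
Qed.

Section ClusterBoundary.
Variables (R : realType) (d : nat) (C : set (dvertex d)).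
Implicit Types (z y : dvertex d) (p : 'rV[R]_d).

Lemma box_in_out_face {z y p} : C z -> ~ C y -> box R z p -> box R y p ->
  (\bigcup_(e in edge_boundary C) face R e.1 e.2) p.
Proof.
move=> Cz nCy zp yp.
pose v n : dvertex d := fun j => if (j < n)%N then y j else z j.
have [k [ltkd Cvk nCvk]] : exists k, [/\ (k < d)%N, C (v k) & ~ C (v k.+1)].
  apply: (exists_last_step (C \o v)) => /=.
    by have -> : v 0%N = z by apply/funext.
  by have -> : v d = y by apply/funext => j; rewrite /v ltn_ord.
have vp n : box R (v n) p.
  by move: zp yp => /boxE zp /boxE yp; apply/boxE => j; rewrite /v; case: ifP.
pose i := Ordinal ltkd.
have offi j : j != i -> v k.+1 j = v k j.
  move=> /negbTE ji; rewrite /v ltnS leq_eqVlt.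
  by have -> : (nat_of_ord j == k) = false := ji.
have := box_meet_dist_le1 (vp k.+1) (vp k) i.
case/(shift_cases offi) => vkE.
- by rewrite vkE in nCvk.
- by exists (i, v k); [left | split]; rewrite /= -?vkE.
- by exists (i, v k.+1); [right | split]; rewrite /= -?vkE.
Qed.

Lemma box_in_out_boundary {z y p} : C z -> ~ C y -> box R z p -> box R y p ->
  topo_boundary (cluster_box R C) p.
Proof.
move=> Cz nCy zp /boxE yp; split; first by apply: subset_closure; exists z.
move=> /nbhs_ballP[e e0 pe].
pose t := Num.min 1 e.
have t0 : 0 < t by rewrite lt_min ltr01 e0.
have [t1 te] : t <= 1 /\ t <= e by rewrite !ge_min !lexx orbT.
pose q : 'rV[R]_d := \row_j (p ord0 j + t * ((y j)%:~R + 2^-1 - p ord0 j)).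
have [z' Cz' z'q] : cluster_box R C q.
  apply: pe; split=> // i j; rewrite (ord1 i) /ball /= mxE.
  have /andP[? ?] := yp j; rewrite ltr_norml; apply/andP; split; nra.
apply: nCy; suff <- : z' = y by [].
apply: (box_inner_eq z'q) => j.
by rewrite mxE; have /andP[? ?] := yp j; apply/andP; split; nra.
Qed.

Lemma boundary_cluster_box_face p : topo_boundary (cluster_box R C) p ->
  (\bigcup_(e in edge_boundary C) face R e.1 e.2) p.
Proof.
case=> clp nintp; have Np := near_box p.
have [q [[z Cz zq] Nq]] := clp _ Np.
have [q' [Nq' nCq']] : exists q' : 'rV[R]_d,
    (forall z, box R z q' -> box R z p) /\ ~ cluster_box R C q'.
  apply: contra_notP nintp => inC; apply: filterS Np => q' Nq'.
  by apply: contra_notP inC => nCq'; exists q'.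
apply: (box_in_out_face Cz _ (Nq _ zq) (Nq' _ (box_floor q'))).
move=> Cy; apply: nCq'.
by exists (fun i => Num.floor (q' ord0 i)); last exact: box_floor.
Qed.

End ClusterBoundary.

(* Only [C] being a set of dual vertices matters: the identity holds for every
   such set and every [d]. *)
Theorem lemma3p2 (R : realType) (d : nat) (hd : (2 <= d)%N)
  (w : config d) (x0 : dvertex d) :
  topo_boundary (cluster_box R (dual_cluster w x0)) =
  \bigcup_(e in edge_boundary (dual_cluster w x0)) face R e.1 e.2.
Proof.
apply/seteqP; split=> p; first exact: boundary_cluster_box_face.
case=> -[i z] /= [[Cz nCs]|[nCz Cs]] [zp sp].
- exact: box_in_out_boundary Cz nCs zp sp.
- exact: box_in_out_boundary Cs nCz sp zp.
Qed.
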